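(* Let $R$ be a zero-dimensional Gorenstein ring and $M$ a finitely generated $R$-module. Then $\mathrm{char}_R(M)=\mathrm{Ann}_R(M)$.
   Context: $M^*=\mathrm{Hom}_R(M,R)$, $\bigcap^n_RM=(\bigwedge^n_R(M^* ))^*$. For a finitely generated $R$-module $M$, choose $n>0$ and an exact sequence $0\to N\to R^n\to M\to0$ and set $\mathrm{char}_R(M)=\mathrm{im}(\bigcap^n_RN\to\bigcap^n_RR^n=R)$ (independent of the choice). *)

From HB Require Import structures.
From mathcomp Require Import all_boot all_order all_algebra.
Set Implicit Arguments. Unset Strict Implicit. Unset Printing Implicit Defensive.
Import Order.TTheory GRing.Theory Num.Theory.
Local Open Scope ring_scope.

Section CommAlg.
Variable R : comNzRingType.

Definition is_linear (U V : lmodType R) (f : U -> V) : Prop :=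
  forall (a : R) (u v : U), f (a *: u + v) = a *: f u + f v.
Definition is_lform (U : lmodType R) (f : U -> R) : Prop :=
  forall (a : R) (u v : U), f (a *: u + v) = a * f u + f v.

Definition is_ideal (I : R -> Prop) : Prop :=
  [/\ I 0, (forall x y, I x -> I y -> I (x + y)) & (forall r x, I x -> I (r * x))].

Definition artinian : Prop :=
  forall I : nat -> R -> Prop, (forall k, is_ideal (I k)) ->
    (forall k x, I k.+1 x -> I k x) ->
    exists k0, forall k, (k0 <= k)%N -> forall x, I k x <-> I k0 x.

Definition self_injective : Prop :=
  forall (A B : lmodType R) (i : A -> B) (g : A -> R),
    is_linear i -> injective i -> is_lform g ->
    exists h : B -> R, is_lform h /\ forall a, h (i a) = g a.

(* Zero-dimensional Gorenstein ring = Artinian self-injective ring (Bass). *)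
Definition zero_dim_gorenstein : Prop := artinian /\ self_injective.

Definition fin_gen (M : lmodType R) : Prop :=
  exists n (v : 'I_n -> M), forall m : M,
    exists c : 'I_n -> R, m = \sum_(i < n) c i *: v i.

Definition annihilator (M : lmodType R) (r : R) : Prop :=
  forall m : M, r *: m = 0.

(* Elements of the dual N^dual of a submodule N (given as a predicate S on V)
   are represented by functions V -> R that are linear on S, up to
   agreement on S. *)
Definition sub_dual (V : lmodType R) (S : V -> Prop) (phi : V -> R) : Prop :=
  forall a u v, S u -> S v -> phi (a *: u + v) = a * phi u + phi v.
Definition sub_eq (V : lmodType R) (S : V -> Prop) (phi psi : V -> R) : Prop :=
  forall u, S u -> phi u = psi u.

Definition upd (V : lmodType R) n (phi : 'I_n -> V -> R) (i : 'I_n) (x : V -> R) :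
  'I_n -> V -> R := fun j => if j == i then x else phi j.

(* Phi is an element of (\bigwedge^n (N^dual))^dual, i.e. a (well-defined)
   alternating R-multilinear form on (N^dual)^n. *)
Definition alt_multilin (V : lmodType R) n (S : V -> Prop)
    (Phi : ('I_n -> V -> R) -> R) : Prop :=
  [/\ (forall phi psi, (forall i, sub_dual S (phi i)) ->
          (forall i, sub_dual S (psi i)) ->
          (forall i, sub_eq S (phi i) (psi i)) -> Phi phi = Phi psi),
      (forall phi i a psi chi, (forall j, sub_dual S (phi j)) ->
          sub_dual S psi -> sub_dual S chi ->
          Phi (upd phi i (fun u => a * psi u + chi u))
            = a * Phi (upd phi i psi) + Phi (upd phi i chi))
    & (forall phi i j, (forall k, sub_dual S (phi k)) -> i != j ->
          sub_eq S (phi i) (phi j) -> Phi phi = 0)].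

(* For a presentation f : R^n ->> M with kernel N, char_R(M) is the image of
   \bigcap^n N -> \bigcap^n R^n = R, the last identification being
   Psi |-> Psi(e_1^dual /\ ... /\ e_n^dual); so the image consists of the values
   Phi(e_1^dual|_N, ..., e_n^dual|_N). *)
Definition char_pres (M : lmodType R) n (f : 'rV[R]_n -> M) (r : R) : Prop :=
  exists Phi, alt_multilin (fun v => f v = 0) Phi /\
              r = Phi (fun i (v : 'rV[R]_n) => v ord0 i).

End CommAlg.

(* Let N be the kernel of f : R^n ->> M and e_i^dual the coordinate forms on R^n.
   If r = Phi(e_1^dual, ..., e_n^dual) and k is a linear form on R^n vanishing on N,
   then substituting k = sum_l k(e_l) e_l^dual in the j-th slot and using
   alternation gives k(e_j) r = Phi(..., k, ...) = 0, so k vanishes on r R^n.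
   Over an Artinian ring every proper ideal has a nonzero annihilator, and over
   a self-injective ring linear forms extend from submodules; together they give,
   for every u outside N, a linear form vanishing on N but not at u.  Hence
   r R^n lies in N, i.e. r M = 0.
   Conversely, if r M = 0 then every r e_j lies in N.  Extend each phi in N^dual to
   a form phi' on R^n: the products r phi'(e_j) = phi(r e_j) depend only on phi,
   so phi |-> r det(phi_i'(e_j)) is a well-defined alternating multilinear form
   on N^dual, and its value at the coordinate forms is r det 1 = r. *)

From HB Require Import structures.
From mathcomp Require Import all_boot all_order all_algebra.
From mathcomp Require Import boolp ring.
Set Implicit Arguments. Unset Strict Implicit. Unset Printing Implicit Defensive.
Import GRing.Theory.
Local Open Scope ring_scope.

Section Artinian.
Variable R : comNzRingType.
Hypothesis R_artinian : artinian R.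

Lemma artinian_min_principal (Q : R -> Prop) x0 : Q x0 ->
  exists2 x, Q x & forall y, Q y -> (exists s, y = x * s) -> exists t, x = y * t.
Proof.
move=> Qx0; apply: contrapT => no_min.
have step x : exists y, Q x -> [/\ Q y, exists s, y = x * s & ~ exists t, x = y * t].
  have [Qx|nQx] := EM (Q x); last by exists x.
  apply: contrapT => /forallNP none; apply: no_min; exists x => // y Qy xy.
  by apply: contrapT => nyx; apply: (none y).
have [next nextP] := choice step.
pose x_ k := iter k next x0.
have Qx_ k : Q (x_ k) by elim: k => //= k IHk; case: (nextP _ IHk).
pose I k z := exists s, z = x_ k * s.
have I_ideal k : is_ideal (I k).
  split.
  - by exists 0; rewrite mulr0.
  - by move=> x y [s1 ->] [s2 ->]; exists (s1 + s2); rewrite mulrDr.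
  - by move=> r x [s ->]; exists (r * s); rewrite mulrCA.
have I_decr k x : I k.+1 x -> I k x.
  move=> [s ->]; have [_ [s0 /= ->] _] := nextP _ (Qx_ k).
  by exists (s0 * s); rewrite /= mulrA.
have [k0 I_stable] := R_artinian I_ideal I_decr.
have /(I_stable k0.+1 (leqnSn _)) [t xt] : I k0 (x_ k0) by exists 1; rewrite mulr1.
by have [_ _] := nextP _ (Qx_ k0); apply; exists t.
Qed.

Lemma artinian_pow_idem (c : R) :
  exists k e, [/\ (0 < k)%N, e * e = e, c ^+ k = c ^+ k * e & exists t, e = c * t].
Proof.
pose Q y := exists2 k, (0 < k)%N & y = c ^+ k.
have Qc : Q c by exists 1%N; rewrite ?expr1.
have [_ [k k_gt0 ->] min] := artinian_min_principal Qc.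
(* Fitting: minimality of c^k R gives c^k = c^(2k) d^k, so c^k d^k is idempotent. *)
have [d ckd] : exists d, c ^+ k = c ^+ k.+1 * d.
  by apply: min; [exists k.+1 | exists c; rewrite exprSr].
have ck_pow j : c ^+ k = c ^+ (k + j) * d ^+ j.
  elim: j => [|j IHj]; first by rewrite addn0 mulr1.
  have -> : c ^+ (k + j.+1) * d ^+ j.+1 = c ^+ k.+1 * d * (c ^+ j * d ^+ j).
    by rewrite addnS -addSn exprD !exprS; ring.
  by rewrite -ckd mulrA -exprD -IHj.
exists k, (c ^+ k * d ^+ k); split => //.
- by rewrite {3}(ck_pow k) exprD; ring.
- by rewrite {1}(ck_pow k) exprD mulrA.
- by exists (c ^+ k.-1 * d ^+ k); rewrite mulrA -exprS prednK.
Qed.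

Lemma artinian_ideal_idem_nil (J : R -> Prop) : is_ideal J ->
  exists e, [/\ J e, e * e = e & forall b, J b -> exists N, ((1 - e) * b) ^+ N = 0].
Proof.
move=> [J0 JD JM].
(* Take 1 - e minimal; a non-nilpotent (1 - e) b would have a Fitting idempotent
   f orthogonal to e, and 1 - (e + f) would be strictly smaller. *)
pose Q y := exists2 e, J e /\ e * e = e & y = 1 - e.
have Q1 : Q 1 by exists 0; rewrite ?mulr0 ?subr0.
have [_ [e [Je ee] ->] min] := artinian_min_principal Q1.
have e1e : e * (1 - e) = 0 by rewrite mulrBr mulr1 ee subrr.
exists e; split => // b Jb.
have [k [f [_ ff ckf [t ft]]]] := artinian_pow_idem ((1 - e) * b).
have Jf : J f by rewrite ft mulrC; apply/JM/JM.
have ef : e * f = 0 by rewrite ft !mulrA e1e !mul0r.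
have Qef : Q (1 - (e + f)).
  exists (e + f) => //; split; first exact: JD.
  by rewrite mulrDl !mulrDr ee ff ef mulrC ef add0r addr0.
have [|s es] := min _ Qef.
  by exists (1 - f); rewrite mulrBr mulr1 !mulrBl mul1r ef subr0 opprD addrA.
have f0 : f = 0.
  have -> : f = f * (1 - e) by rewrite mulrBr mulr1 mulrC ef subr0.
  by rewrite es mulrA mulrBr mulr1 mulrDr ff [f * e]mulrC ef add0r subrr mul0r.
by exists k; rewrite ckf f0 mulr0.
Qed.

Lemma artinian_proper_ideal_ann (J : R -> Prop) : is_ideal J -> ~ J 1 ->
  exists2 a, a != 0 & forall b, J b -> a * b = 0.
Proof.
move=> J_ideal nJ1; have [e [Je ee nil]] := artinian_ideal_idem_nil J_ideal.
have e1e : e * (1 - e) = 0 by rewrite mulrBr mulr1 ee subrr.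
(* For a R minimal nonzero in (1 - e) R, a b <> 0 would force a = a ((1 - e) b t)^N,
   which vanishes since (1 - e) b is nilpotent. *)
pose Q y := y != 0 /\ exists t, y = (1 - e) * t.
have Q1e : Q (1 - e).
  split; last by exists 1; rewrite mulr1.
  by rewrite subr_eq0; apply: contra_notN nJ1 => /eqP ->.
have [a [a_neq0 [t0 at0]] min] := artinian_min_principal Q1e.
exists a => // b Jb; apply/eqP; apply: contraTT a_neq0 => ab_neq0; rewrite negbK.
have ae : a * e = 0 by rewrite at0 mulrAC [(1 - e) * e]mulrC e1e mul0r.
have ab_e : a * b = a * ((1 - e) * b) by rewrite mulrA mulrBr mulr1 ae subr0.
have Qab : Q (a * b) by split => //; exists (t0 * b); rewrite at0 mulrA.
have [t abt] := min _ Qab (ex_intro _ b erefl).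
have ax : a * ((1 - e) * b * t) = a by rewrite mulrA -ab_e -abt.
have a_pow j : a = a * ((1 - e) * b * t) ^+ j.
  by elim: j => [|j IHj]; rewrite ?mulr1 // exprS mulrA ax.
have [N nilN] := nil b Jb.
by rewrite (a_pow N) exprMn nilN mul0r mulr0.
Qed.

End Artinian.

Section LinearForms.
Variable R : comNzRingType.

Definition linear_of (U V : lmodType R) (f : U -> V) (f_lin : is_linear f) :
  {linear U -> V} := HB.pack f (GRing.isLinear.Build R U V *:%R f f_lin).

Definition lform_of (U : lmodType R) (h : U -> R) (h_lin : is_lform h) :
  {linear U -> R^o} := @linear_of U R^o h h_lin.

Lemma is_linear0 (U V : lmodType R) (f : U -> V) : is_linear f -> f 0 = 0.
Proof. by move=> f_lin; exact: linear0 (linear_of f_lin). Qed.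

Lemma is_linearZ (U V : lmodType R) (f : U -> V) a u :
  is_linear f -> f (a *: u) = a *: f u.
Proof. by move=> f_lin; exact: linearZ_LR (linear_of f_lin) a u. Qed.

Lemma is_lformZ (U : lmodType R) (h : U -> R) a u : is_lform h -> h (a *: u) = a * h u.
Proof. by move=> h_lin; exact: linearZ_LR (lform_of h_lin) a u. Qed.

Lemma is_lform_rowE n (h : 'rV[R]_n -> R) u :
  is_lform h -> h u = \sum_j u 0 j * h (delta_mx 0 j).
Proof.
move=> h_lin; rewrite {1}(row_sum_delta u).
transitivity (\sum_j h (u 0 j *: delta_mx 0 j)).
  exact: (@linear_sum _ _ _ _ (lform_of h_lin)).
by apply: eq_bigr => j _; apply: is_lformZ.
Qed.

End LinearForms.

Definition is_submodule (R : comNzRingType) (V : lmodType R) (S : V -> Prop) :=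
  S 0 /\ forall a u v, S u -> S v -> S (a *: u + v).

Section Submodule.
Variables (R : comNzRingType) (V : lmodType R) (S : V -> Prop).
Hypothesis S_submod : is_submodule S.

Lemma submod0 : S 0. Proof. by case: S_submod. Qed.

Lemma submodD u v : S u -> S v -> S (u + v).
Proof. by case: S_submod => _ SL Su Sv; rewrite -[u]scale1r; apply: SL. Qed.

Lemma submodZ a u : S u -> S (a *: u).
Proof. by case: S_submod => S0 SL Su; rewrite -[_ *: _]addr0; apply: SL. Qed.

Lemma submodB u v : S u -> S v -> S (u - v).
Proof. by move=> Su Sv; rewrite -scaleN1r addrC; apply: (proj2 S_submod). Qed.

End Submodule.

Lemma kernel_submodule (R : comNzRingType) (U V : lmodType R) (f : U -> V) :
  is_linear f -> is_submodule (fun u => f u = 0).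
Proof.
move=> f_lin; split; first exact: is_linear0.
by move=> a u v fu fv; rewrite f_lin fu fv scaler0 addr0.
Qed.

Section SubmoduleType.
Variables (R : comNzRingType) (V : lmodType R) (S : V -> Prop).
Variable S_submod : is_submodule S.

(* The closure proof is a parameter so that the lmodType instance below is canonical. *)
Definition submod_pred of is_submodule S : pred V := fun v => `[< S v >].

Fact submod_pred_closed : subsemimod_closed (submod_pred S_submod).
Proof.
apply: GRing.submod_closed_semi; split; first by apply/asboolP; apply: submod0.
by move=> a u v /asboolP Su /asboolP Sv; apply/asboolP; apply: (proj2 S_submod).
Qed.

HB.instance Definition _ :=
  GRing.isSubmodClosed.Build R V (submod_pred S_submod) submod_pred_closed.

Record submod_type := SubMod { submod_val : V; _ : submod_pred S_submod submod_val }.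
HB.instance Definition _ := [isSub for submod_val].
HB.instance Definition _ := [Choice of submod_type by <:].
HB.instance Definition _ := [SubChoice_isSubLmodule of submod_type by <:].

End SubmoduleType.

Section SelfInjective.
Variables (R : comNzRingType) (V : lmodType R).

Lemma self_injective_extend (S : V -> Prop) (g : V -> R) :
  self_injective R -> is_submodule S -> sub_dual S g ->
  exists2 h, is_lform h & sub_eq S h g.
Proof.
move=> R_inj S_submod g_dual.
have val_lin : is_linear (val : submod_type S_submod -> V) by [].
have g_lform : is_lform (fun x : submod_type S_submod => g (val x)).
  move=> a x y; have -> : val (a *: x + y) = a *: val x + val y by [].
  by apply: g_dual; apply/asboolP; [exact: (valP x) | exact: (valP y)].
have [h [h_lform hg]] := R_inj _ _ _ _ val_lin val_inj g_lform.
exists h => // u Su.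
by have := hg (Sub u (asboolT Su) : submod_type S_submod); rewrite SubK.
Qed.

Lemma coset_line_comb (N : V -> Prop) u b v w a a' : is_submodule N ->
  N (v - a *: u) -> N (w - a' *: u) -> N (b *: v + w - (b * a + a') *: u).
Proof.
move=> [_ NL] Nv Nw; rewrite scalerDl -scalerA opprD addrACA -scalerBr.
exact: NL.
Qed.

Lemma submodule_add_line (N : V -> Prop) u :
  is_submodule N -> is_submodule (fun v => exists a, N (v - a *: u)).
Proof.
move=> N_submod; split; first by exists 0; rewrite scale0r subr0; apply: submod0 N_submod.
by move=> b v w [a Nv] [a' Nw]; exists (b * a + a'); apply: coset_line_comb.
Qed.

Lemma line_form (N : V -> Prop) u c : is_submodule N ->
  (forall a, N (a *: u) -> c * a = 0) ->
  exists g, [/\ sub_dual (fun v => exists a, N (v - a *: u)) g,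
                sub_eq N g (fun=> 0) & g u = c].
Proof.
(* g (v) = c a for v - a u in N; well defined since c kills every a with a u in N. *)
move=> N_submod c_ann.
have [coef coefP] : {coef : V -> R &
    forall v, (exists a, N (v - a *: u)) -> N (v - coef v *: u)}.
  apply: (@choice _ _ (fun v a => (exists a, N (v - a *: u)) -> N (v - a *: u))) => v.
  by have [[a Nv]|] := EM (exists a, N (v - a *: u)); [exists a | exists 0].
have g_val v a : N (v - a *: u) -> c * coef v = c * a.
  move=> Nv; apply/eqP; rewrite -subr_eq0 -mulrBr; apply/eqP/c_ann.
  have -> : (coef v - a) *: u = (v - a *: u) - (v - coef v *: u).
    by rewrite scalerBl opprB [RHS]addrC addrA subrK.
  by apply: submodB => //; apply: coefP; exists a.
exists (fun v => c * coef v); split.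
- move=> b v w [a Nv] [a' Nw].
  rewrite (g_val _ _ Nv) (g_val _ _ Nw) (g_val _ (b * a + a')); first ring.
  exact: coset_line_comb.
- by move=> v Nv; rewrite (g_val v 0) ?mulr0 // scale0r subr0.
- by rewrite (g_val u 1) ?mulr1 // scale1r subrr; apply: submod0 N_submod.
Qed.

Lemma artinian_self_injective_separate (N : V -> Prop) u :
  artinian R -> self_injective R -> is_submodule N -> ~ N u ->
  exists2 k, is_lform k & sub_eq N k (fun=> 0) /\ k u != 0.
Proof.
move=> R_art R_inj N_submod Nu.
have J_ideal : is_ideal (fun a => N (a *: u)).
  split; first by rewrite scale0r; apply: submod0 N_submod.
    by move=> a b Na Nb; rewrite scalerDl; apply: submodD.
  by move=> r a Na; rewrite -scalerA; apply: submodZ.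
have J_proper : ~ N (1 *: u) by rewrite scale1r.
have [c c_neq0 c_ann] := artinian_proper_ideal_ann R_art J_ideal J_proper.
have [g [g_dual g_N gu]] := line_form N_submod c_ann.
have [k k_lform kg] := self_injective_extend R_inj (submodule_add_line u N_submod) g_dual.
exists k => //; split.
  by move=> v Nv; rewrite kg ?g_N //; exists 0; rewrite scale0r subr0.
by rewrite kg ?gu //; exists 1; rewrite scale1r subrr; apply: submod0 N_submod.
Qed.

End SelfInjective.

Section SubDual.
Variables (R : comNzRingType) (V : lmodType R) (S : V -> Prop).

Lemma sub_dual0 : sub_dual S (fun=> 0).
Proof. by move=> *; rewrite mulr0 addr0. Qed.

Lemma sub_dual_comb a psi chi : sub_dual S psi -> sub_dual S chi ->
  sub_dual S (fun u => a * psi u + chi u).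
Proof. by move=> psi_dual chi_dual b u v Su Sv; rewrite psi_dual // chi_dual //; ring. Qed.

Lemma sub_dual_sum (I : Type) (s : seq I) (a : I -> R) (psi : I -> V -> R) :
  (forall l, sub_dual S (psi l)) -> sub_dual S (fun u => \sum_(l <- s) a l * psi l u).
Proof.
move=> psi_dual b u v Su Sv; rewrite mulr_sumr -big_split /=.
by apply: eq_bigr => l _; rewrite psi_dual //; ring.
Qed.

Lemma sub_dual_upd n (phi : 'I_n -> V -> R) i X :
  (forall j, sub_dual S (phi j)) -> sub_dual S X -> forall j, sub_dual S (upd phi i X j).
Proof. by move=> phi_dual X_dual j; rewrite /upd; case: (j == i). Qed.

Lemma lform_sub_dual (h : V -> R) : is_lform h -> sub_dual S h.
Proof. by move=> h_lin a u v _ _; apply: h_lin. Qed.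

End SubDual.

Section AltMultilin.
Variables (R : comNzRingType) (V : lmodType R) (S : V -> Prop) (n : nat).
Variable Phi : ('I_n -> V -> R) -> R.
Hypothesis Phi_alt : alt_multilin S Phi.

Lemma alt_multilin_upd_eq phi i X Y : (forall j, sub_dual S (phi j)) ->
  sub_dual S X -> sub_dual S Y -> sub_eq S X Y ->
  Phi (upd phi i X) = Phi (upd phi i Y).
Proof.
case: Phi_alt => Phi_eq _ _ phi_dual X_dual Y_dual XY.
apply: Phi_eq; try exact: sub_dual_upd.
by move=> j u Su; rewrite /upd; case: (j == i); [apply: XY | ].
Qed.

Lemma alt_multilin_upd0 phi i : (forall j, sub_dual S (phi j)) ->
  Phi (upd phi i (fun=> 0)) = 0.
Proof.
case: Phi_alt => _ Phi_lin _ phi_dual.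
have := Phi_lin phi i 1 _ _ phi_dual (@sub_dual0 _ _ S) (@sub_dual0 _ _ S).
rewrite (@alt_multilin_upd_eq _ _ _ (fun=> 0)) //.
- by rewrite mul1r => /eqP; rewrite -subr_eq subrr eq_sym => /eqP.
- exact: sub_dual_comb (@sub_dual0 _ _ S) (@sub_dual0 _ _ S).
- exact: sub_dual0.
- by move=> u _; rewrite mulr0 addr0.
Qed.

Lemma alt_multilin_upd_sum phi i (I : Type) (s : seq I) (a : I -> R) psi :
  (forall j, sub_dual S (phi j)) -> (forall l, sub_dual S (psi l)) ->
  Phi (upd phi i (fun u => \sum_(l <- s) a l * psi l u))
    = \sum_(l <- s) a l * Phi (upd phi i (psi l)).
Proof.
case: Phi_alt => _ Phi_lin _ phi_dual psi_dual.
have sum_dual t : sub_dual S (fun u => \sum_(l <- t) a l * psi l u) by exact: sub_dual_sum.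
elim: s => [|l s IHs].
  rewrite big_nil -[RHS](alt_multilin_upd0 i phi_dual).
  apply: alt_multilin_upd_eq => //; first exact: sub_dual0.
  by move=> u _; rewrite big_nil.
rewrite big_cons -IHs -Phi_lin //.
apply: alt_multilin_upd_eq => //; first exact: sub_dual_comb.
by move=> u _; rewrite big_cons.
Qed.

Lemma alt_multilin_upd_lincomb psi j (a : 'I_n -> R) : (forall l, sub_dual S (psi l)) ->
  Phi (upd psi j (fun u => \sum_l a l * psi l u)) = a j * Phi psi.
Proof.
case: Phi_alt => Phi_eq _ Phi_zero psi_dual.
rewrite alt_multilin_upd_sum // (bigD1 j) //= big1 ?addr0.
  congr (_ * _); apply: Phi_eq => //; first exact: sub_dual_upd.
  by move=> l u _; rewrite /upd; case: eqP => // ->.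
move=> l l_neq_j; rewrite (@Phi_zero _ j l) ?mulr0 //; first exact: sub_dual_upd.
  by rewrite eq_sym.
by move=> u _; rewrite /upd eqxx (negbTE l_neq_j).
Qed.

End AltMultilin.

Lemma mulr_det_eq (R : comNzRingType) n (r : R) (A B : 'M[R]_n) :
  (forall i j, r * A i j = r * B i j) -> r * \det A = r * \det B.
Proof.
move=> rAB; pose K x y := r * x = r * y.
have KD x1 y1 x2 y2 : K x1 y1 -> K x2 y2 -> K (x1 + x2) (y1 + y2).
  by rewrite /K !mulrDr => -> ->.
have KM x1 y1 x2 y2 : K x1 y1 -> K x2 y2 -> K (x1 * x2) (y1 * y2).
  by rewrite /K => e1 e2; rewrite mulrA e1 -mulrA mulrCA e2 mulrCA.
apply: (big_ind2 K) => [//|x1 x2 y1 y2|s _]; first exact: (KD).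
apply: (KM) => //; apply: (big_ind2 K) => [//|x1 x2 y1 y2|i _]; first exact: KM.
exact: rAB.
Qed.

Section DetForm.
Variables (R : comNzRingType) (V : lmodType R) (S : V -> Prop) (n : nat).
Variables (r : R) (w : 'I_n -> V) (e : (V -> R) -> 'I_n -> R).
Hypothesis w_S : forall j, S (w j).
Hypothesis r_e : forall phi j, sub_dual S phi -> r * e phi j = phi (w j).

Let E (phi : 'I_n -> V -> R) : 'M[R]_n := \matrix_(i, j) e (phi i) j.

Lemma mulr_det_alt_multilin : alt_multilin S (fun phi => r * \det (E phi)).
Proof.
have r_E phi i j : sub_dual S (phi i) -> r * E phi i j = phi i (w j).
  by move=> phi_dual; rewrite mxE r_e.
split.
- move=> phi psi phi_dual psi_dual phi_psi; apply: mulr_det_eq => i j.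
  by rewrite !r_E // phi_psi.
- move=> phi i a psi chi phi_dual psi_dual chi_dual.
  set B := E (upd phi i psi); set C := E (upd phi i chi).
  pose D := \matrix_(k, j) (if k == i then a * B i j + C i j else B k j).
  have upd_dual X : sub_dual S X -> forall k, sub_dual S (upd phi i X k).
    exact: sub_dual_upd.
  rewrite (@mulr_det_eq _ _ r _ D).
    rewrite (@determinant_multilinear _ _ D B C i a 1); first ring.
    + by apply/rowP => j; rewrite !mxE eqxx mul1r.
    + by apply/matrixP => k j; rewrite !mxE eq_sym (negbTE (neq_lift i k)).
    + apply/matrixP => k j; rewrite !mxE eq_sym (negbTE (neq_lift i k)).
      by rewrite /upd eq_sym (negbTE (neq_lift i k)).
  move=> k j; rewrite r_E; last exact: upd_dual (sub_dual_comb _ psi_dual chi_dual) k.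
  rewrite mxE /B /C; have [->|k_neq_i] := eqVneq k i.
    by rewrite mulrDr mulrCA !r_E ?upd_dual // /upd eqxx.
  by rewrite !r_E ?upd_dual // /upd (negbTE k_neq_i).
- move=> phi i j phi_dual i_neq_j phi_ij.
  pose D := \matrix_(k, l) E phi (if k == i then j else k) l.
  rewrite (@mulr_det_eq _ _ r _ D).
    rewrite (@determinant_alternate _ _ D i j) ?mulr0 // => l.
    by rewrite !mxE eqxx eq_sym (negbTE i_neq_j).
  move=> k l; rewrite !mxE; have [->|//] := eqVneq k i.
  by rewrite !r_e // phi_ij.
Qed.

End DetForm.

Section CharPres.
Variables (R : comNzRingType) (M : lmodType R) (n : nat) (f : 'rV[R]_n -> M).
Hypothesis f_lin : is_linear f.

Let N (v : 'rV[R]_n) := f v = 0.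
Let coord (i : 'I_n) (v : 'rV[R]_n) : R := v ord0 i.

Lemma coord_dual i : sub_dual N (coord i).
Proof. by move=> a u v _ _; rewrite /coord !mxE. Qed.

Lemma char_pres_lform_ker r k : char_pres f r -> is_lform k -> sub_eq N k (fun=> 0) ->
  forall j, k (delta_mx 0 j) * r = 0.
Proof.
move=> [Phi [Phi_alt ->]] k_lin k_N j.
have k_dual : sub_dual N k := lform_sub_dual k_lin.
have sum_dual := sub_dual_sum (index_enum _) (fun l => k (delta_mx 0 l)) coord_dual.
rewrite -(alt_multilin_upd_lincomb Phi_alt j (fun l => k (delta_mx 0 l)) coord_dual).
rewrite (alt_multilin_upd_eq Phi_alt j coord_dual sum_dual k_dual); last first.
  by move=> u _; rewrite (is_lform_rowE u k_lin); apply: eq_bigr => l _; rewrite mulrC.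
rewrite (alt_multilin_upd_eq Phi_alt j coord_dual k_dual (@sub_dual0 _ _ N) k_N).
by rewrite (alt_multilin_upd0 Phi_alt j coord_dual).
Qed.

Lemma char_pres_annihilator r : artinian R -> self_injective R ->
  (forall m : M, exists v, f v = m) -> char_pres f r -> annihilator M r.
Proof.
move=> R_art R_inj f_onto r_char m; have [w <-] := f_onto m.
rewrite -is_linearZ //; apply: contrapT => rw_notin_N.
have [k k_lin [k_N]] := artinian_self_injective_separate R_art R_inj
  (kernel_submodule f_lin) rw_notin_N.
rewrite is_lformZ // is_lform_rowE // mulr_sumr big1 ?eqxx // => j _.
by rewrite mulrCA [r * _]mulrC (char_pres_lform_ker r_char k_lin k_N) mulr0.
Qed.

Lemma annihilator_char_pres r : self_injective R -> annihilator M r -> char_pres f r.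
Proof.
move=> R_inj r_ann.
have [ext extP] : {ext : ('rV[R]_n -> R) -> 'rV[R]_n -> R &
    forall phi, sub_dual N phi -> is_lform (ext phi) /\ sub_eq N (ext phi) phi}.
  apply: (@choice _ _ (fun phi h => sub_dual N phi -> is_lform h /\ sub_eq N h phi)) => phi.
  have [phi_dual|] := EM (sub_dual N phi); last by exists phi.
  have [h h_lin h_phi] := self_injective_extend R_inj (kernel_submodule f_lin) phi_dual.
  by exists h.
pose w j : 'rV[R]_n := r *: delta_mx 0 j.
have w_N j : N (w j) by rewrite /N is_linearZ // r_ann.
have r_ext phi j : sub_dual N phi -> r * ext phi (delta_mx 0 j) = phi (w j).
  by move=> /extP[ext_lin ext_phi]; rewrite -is_lformZ //; apply: ext_phi; apply: w_N.
exists (fun phi => r * \det (\matrix_(i, j) ext (phi i) (delta_mx 0 j))); split.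
  exact: mulr_det_alt_multilin w_N r_ext.
transitivity (r * \det (1%:M : 'M[R]_n)); first by rewrite det1 mulr1.
apply: mulr_det_eq => i j; rewrite !mxE r_ext; last exact: coord_dual.
by rewrite /w !mxE.
Qed.

End CharPres.

Theorem propositionC8 (R : comNzRingType) (M : lmodType R) :
  zero_dim_gorenstein R -> fin_gen M ->
  forall (n : nat) (f : 'rV[R]_n -> M),
    (0 < n)%N -> is_linear f -> (forall m : M, exists v, f v = m) ->
    forall r : R, char_pres f r <-> annihilator M r.
Proof.
(* Finite generation is witnessed by f itself, and n = 0 needs no special case. *)
move=> [R_art R_inj] _ n f _ f_lin f_onto r; split.
  exact: char_pres_annihilator.
exact: annihilator_char_pres.
Qed.
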